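(* Let $n\ge 1$, $N=2^n$ and $s=(N-1)/2$. Let $0\le j<N/2$ be an integer and let $z\in\{0,1\}^N$ have Hamming distance strictly less than $N/16$ from the Hadamard codeword $W^{(N)}_j$. Let $$|\Psi_3\rangle=\hat H^{\otimes n}\,\hat U_z\,\hat H^{\otimes n}\,\tfrac{1}{\sqrt2}\left(\left|\tfrac12\right\rangle_s+\left|-\tfrac12\right\rangle_s\right).$$ Then measuring $|\Psi_3\rangle$ in the spin basis yields one of the two states $|\tfrac12+j\rangle_s$, $|-\tfrac12-j\rangle_s$ with probability at least $9/16$, i.e. $$\left|\left\langle \tfrac12+j\,\middle|\,\Psi_3\right\rangle_s\right|^2+\left|\left\langle -\tfrac12-j\,\middle|\,\Psi_3\right\rangle_s\right|^2\ \ge\ \tfrac{9}{16}.$$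
   Context: Work in $\mathbb{C}^N$ with computational basis $\{|y\rangle : y=0,\dots,N-1\}$. The spin basis states $|m\rangle_s$, $m\in\{-s,\dots,s\}$, are identified with computational basis states via $|m\rangle_s=|m+s\rangle$. For $x,y\in\{0,\dots,N-1\}$ let $x\cdot y\in\{0,1\}$ be the inner product modulo 2 of their $n$-bit binary expansions. $\hat H^{\otimes n}|y\rangle=N^{-1/2}\sum_{x=0}^{N-1}(-1)^{x\cdot y}|x\rangle$. The Hadamard codeword $W^{(N)}_j\in\{0,1\}^N$ has bit $x\cdot j$ at position $x\in\{0,\dots,N-1\}$. For $z\in\{0,1\}^N$, $\hat U_z$ is the diagonal unitary $\hat U_z|x\rangle=(-1)^{z_x}|x\rangle$. Strings at Hamming distance less than $N/16$ from $W^{(N)}_j$ are called codewords with fewer than $N/16$ unrestricted errors (the set $\Xi^{(N)}_j$). *)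

From HB Require Import structures.
From mathcomp Require Import all_boot all_order all_algebra all_field.
Set Implicit Arguments. Unset Strict Implicit. Unset Printing Implicit Defensive.
Import Order.TTheory GRing.Theory Num.Theory.
Local Open Scope ring_scope.

Definition bit (i x : nat) : bool := odd (x %/ 2 ^ i).

Definition bitdot (n x y : nat) : bool :=
  odd (\sum_(i < n) (bit i x && bit i y))%N.

(* Hadamard transform H^{(x) n}: <x|H^n|y> = N^{-1/2} (-1)^{x.y} *)
Definition hadn (n : nat) : 'M[algC]_(2 ^ n) :=
  \matrix_(x, y) ((sqrtC (2 ^ n)%:R)^-1 * (-1) ^+ bitdot n x y).

Definition Uz (n : nat) (z : {ffun 'I_(2 ^ n) -> bool}) : 'M[algC]_(2 ^ n) :=
  \matrix_(x, y) ((x == y)%:R * (-1) ^+ z x).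

Definition hadamard_codeword (n j : nat) : {ffun 'I_(2 ^ n) -> bool} :=
  [ffun x : 'I_(2 ^ n) => bitdot n x j].

Definition hamming_dist (n : nat) (z w : {ffun 'I_(2 ^ n) -> bool}) : nat :=
  #|[set x : 'I_(2 ^ n) | z x != w x]|.

Definition spin (n : nat) : algC := ((2 ^ n)%:R - 1) / 2.

(* spin basis state |m>_s := |m + s> (computational basis) *)
Definition spin_ket (n : nat) (m : algC) : 'cV[algC]_(2 ^ n) :=
  \col_(i < 2 ^ n) ((i%:R == m + spin n)%:R).

Definition braket (N : nat) (a b : 'cV[algC]_N) : algC :=
  \sum_(i < N) (a i 0)^* * b i 0.

Definition Psi3 (n : nat) (z : {ffun 'I_(2 ^ n) -> bool}) : 'cV[algC]_(2 ^ n) :=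
  hadn n *m Uz z *m hadn n *m
  ((sqrtC 2)^-1 *: (spin_ket n (1 / 2) + spin_ket n (- (1 / 2)))).

From HB Require Import structures.
From mathcomp Require Import all_boot all_order all_algebra all_field zify ring.
Set Implicit Arguments. Unset Strict Implicit. Unset Printing Implicit Defensive.
Import Order.TTheory GRing.Theory Num.Theory.
Local Open Scope ring_scope.

(* Write N = 2^(m+1), so that |1/2>_s = |2^m> and |-1/2>_s = |2^m - 1>.  The
   amplitude of |y> in Psi_3 is (sqrt 2 N)^-1 times a sum over x of the signs
   (-1)^(x.y) (-1)^(z_x) ((-1)^(x.2^m) + (-1)^(x.(2^m - 1))).  When z is the
   codeword W_j itself and y is 2^m + j or 2^m - 1 - j, the three bit strings
   combine so that exactly one of the two character sums is trivial and the
   sum equals N.  Each of the d < N/16 errors of z lowers the sum by at most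
   4, so both amplitudes exceed 3/(4 sqrt 2) and each probability is at least
   9/32. *)

Lemma bit0E y : bit 0 y = odd y.
Proof. by rewrite /bit expn0 divn1. Qed.

Lemma bitS i y : bit i.+1 y = bit i y./2.
Proof. by rewrite /bit expnS divnMA divn2. Qed.

Lemma bit0n i : bit i 0 = false.
Proof. by rewrite /bit div0n. Qed.

Lemma bit_small m i k : (k < 2 ^ m)%N -> (m <= i)%N -> bit i k = false.
Proof. by move=> hk hi; rewrite /bit divn_small // (leq_trans hk) ?leq_exp2l. Qed.

Lemma half_ltn_exp2 m k : (k < 2 ^ m.+1)%N -> (k./2 < 2 ^ m)%N.
Proof.
rewrite expnS mul2n -{1}(odd_double_half k) => hk.
by rewrite -ltn_double (leq_ltn_trans (leq_addl (odd k) _) hk).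
Qed.

Lemma bit_exp2D m i k : (k < 2 ^ m)%N -> bit i (2 ^ m + k) = bit i k (+) (i == m).
Proof.
elim: m i k => [|m IH] i k hk.
  have -> : k = 0%N by move: hk; rewrite expn0; case: k.
  by case: i => [|i]; rewrite ?bit0E ?bitS ?bit0n.
case: i => [|i]; first by rewrite !bit0E oddD oddX; case: (odd k).
rewrite !bitS eqSS -IH ?half_ltn_exp2 //; congr bit.
by rewrite -{1}(odd_double_half k) expnS addnCA mul2n -doubleD half_bit_double.
Qed.

(* [2^m - 1 - k] is the bitwise complement of [k] in [m] bits. *)
Lemma bit_exp2B1B m i k :
  (k < 2 ^ m)%N -> bit i (2 ^ m - 1 - k) = (i < m)%N && ~~ bit i k.
Proof.
elim: m i k => [|m IH] i k hk.
  have -> : k = 0%N by move: hk; rewrite expn0; case: k.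
  by rewrite expn0 subnn sub0n bit0n.
have hp : (0 < 2 ^ m)%N by rewrite expn_gt0.
case: i => [|i].
  rewrite !bit0E oddB; last by move: hk; rewrite expnS; lia.
  by rewrite oddB ?expn_gt0 // oddX /=; case: (odd k).
rewrite !bitS ltnS -IH ?half_ltn_exp2 //; congr bit.
have -> : (2 ^ m.+1 - 1 - k = (~~ odd k) + (2 ^ m - 1 - k./2).*2)%N.
  move: hk (half_ltn_exp2 hk) hp; rewrite expnS -{1 3}(odd_double_half k).
  by case: (odd k) => /=; rewrite -!muln2; lia.
by rewrite half_bit_double.
Qed.

Lemma bit_exp2 m i : bit i (2 ^ m) = (i == m).
Proof. by rewrite -(addn0 (2 ^ m)%N) bit_exp2D ?expn_gt0 // bit0n. Qed.

Lemma bit_exp2B1 m i : bit i (2 ^ m - 1) = (i < m)%N.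
Proof. by rewrite -(subn0 (2 ^ m - 1)%N) bit_exp2B1B ?expn_gt0 // bit0n andbT. Qed.

Lemma bitdotC n x y : bitdot n x y = bitdot n y x.
Proof. by congr odd; apply: eq_bigr => i _; rewrite andbC. Qed.

Lemma sign_bitdot n x u :
  (-1 : algC) ^+ bitdot n x u = \prod_(i < n) (-1) ^+ (bit i x && bit i u).
Proof. by rewrite /bitdot signr_odd expr_sum. Qed.

Lemma sign_bitdot3 n x u v w :
  (-1 : algC) ^+ bitdot n x u * (-1) ^+ bitdot n x v * (-1) ^+ bitdot n x w =
  \prod_(i < n) (-1) ^+ (bit i x && (bit i u (+) bit i v (+) bit i w)).
Proof.
rewrite !sign_bitdot -!big_split; apply: eq_bigr => i _ /=.
by case: (bit i x); case: (bit i u); case: (bit i v); case: (bit i w);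
  rewrite /= ?expr0 ?expr1 ?mulr1 ?mul1r ?mulrNN ?mulN1r ?opprK ?mul1r.
Qed.

Definition flip0 (x : nat) : nat := if odd x then x.-1 else x.+1.

Lemma flip0_ltn m x : (x < 2 ^ m.+1)%N -> (flip0 x < 2 ^ m.+1)%N.
Proof.
rewrite /flip0 => hx; case hx2 : (odd x); first exact: leq_ltn_trans (leq_pred x) hx.
by move: hx; rewrite expnS -{1 2}(odd_double_half x) hx2 /= -!muln2; lia.
Qed.

Lemma odd_flip0 x : odd (flip0 x) = ~~ odd x.
Proof. by rewrite /flip0; case: x => [|x] //=; case hx: (odd x); rewrite /= ?hx. Qed.

Lemma half_flip0 x : (flip0 x)./2 = x./2.
Proof. by rewrite /flip0; case: x => [|x] //=; case hx: (odd x); rewrite /= ?uphalf_half ?hx. Qed.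

Lemma flip0K : involutive flip0.
Proof. by case=> [|x] //; rewrite /flip0 /=; case hx: (odd x); rewrite /= ?hx. Qed.

(* Flipping bit 0 pairs off the terms with opposite signs. *)
Lemma sum_sign_bits m :
  \sum_(x < 2 ^ m.+1) \prod_(i < m.+1) (-1 : algC) ^+ bit i x = 0.
Proof.
pose f (x : 'I_(2 ^ m.+1)) : 'I_(2 ^ m.+1) := Ordinal (flip0_ltn (ltn_ord x)).
have f_inj : injective f by apply: (can_inj (g := f)) => x; apply: val_inj; exact: flip0K.
set S := \sum_(x < _) _.
have SN : S = - S.
  rewrite {1}/S (reindex_inj f_inj) /S -sumrN; apply: eq_bigr => x _.
  rewrite !big_ord_recl !bit0E /= odd_flip0.
  under eq_bigr do rewrite bitS.
  under [in RHS]eq_bigr do rewrite bitS.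
  by rewrite half_flip0; case: (odd x); rewrite /= ?expr0 ?expr1 ?mulN1r ?mul1r ?opprK.
have: S *+ 2 == 0 by rewrite mulr2n {1}SN addNr.
by rewrite mulrn_eq0 => /eqP.
Qed.

Lemma sum_sign_bitdot3 m u v w (c : bool) :
  (forall i : 'I_m.+1, bit i u (+) bit i v (+) bit i w = c) ->
  \sum_(x < 2 ^ m.+1) ((-1 : algC) ^+ bitdot m.+1 x u * (-1) ^+ bitdot m.+1 x v *
     (-1) ^+ bitdot m.+1 x w) = if c then 0 else (2 ^ m.+1)%:R.
Proof.
move=> uvw_c; under eq_bigr => x _ do rewrite sign_bitdot3.
case: c uvw_c => uvw_c.
  under eq_bigr => x _ do (under eq_bigr => i _ do rewrite uvw_c andbT).
  exact: sum_sign_bits.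
under eq_bigr => x _ do (under eq_bigr => i _ do rewrite uvw_c andbF expr0).
by rewrite /= big1_eq sumr_const card_ord.
Qed.

(* The sum over [x] in the amplitude of [|y>] in [Psi3 w], up to the factor
   [(sqrt 2 N)^-1]; here [2^m] and [2^m - 1] are the computational indices of
   the spin states [|1/2>_s] and [|-1/2>_s]. *)
Definition amp_sum m (w : {ffun 'I_(2 ^ m.+1) -> bool}) (y : nat) : algC :=
  \sum_(x < 2 ^ m.+1) ((-1) ^+ bitdot m.+1 x y * (-1) ^+ w x *
     ((-1) ^+ bitdot m.+1 x (2 ^ m) + (-1) ^+ bitdot m.+1 x (2 ^ m - 1))).

Lemma amp_sum_codeword_exp2D m j : (j < 2 ^ m)%N ->
  amp_sum (hadamard_codeword m.+1 j) (2 ^ m + j) = (2 ^ m.+1)%:R.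
Proof.
move=> hj; rewrite /amp_sum.
under eq_bigr => x _ do rewrite ffunE mulrDr.
rewrite big_split /= (sum_sign_bitdot3 (c := false)) ?(sum_sign_bitdot3 (c := true)) ?addr0 // => i.
  rewrite bit_exp2D // bit_exp2B1; have := ltn_ord i; rewrite ltnS leq_eqVlt.
  case/orP => [/eqP -> | hi]; first by rewrite eqxx ltnn; case: bit.
  by rewrite hi (ltn_eqF hi); case: bit.
by rewrite bit_exp2D // bit_exp2; case: bit; case: (_ == _).
Qed.

Lemma amp_sum_codeword_exp2B1B m j : (j < 2 ^ m)%N ->
  amp_sum (hadamard_codeword m.+1 j) (2 ^ m - 1 - j) = (2 ^ m.+1)%:R.
Proof.
move=> hj; rewrite /amp_sum.
under eq_bigr => x _ do rewrite ffunE mulrDr.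
rewrite big_split /= (sum_sign_bitdot3 (c := true)) ?(sum_sign_bitdot3 (c := false)) ?add0r // => i.
  rewrite bit_exp2B1B // bit_exp2B1; case hi: (i < m)%N; first by case: bit.
  by rewrite /= (bit_small hj) // leqNgt hi.
rewrite bit_exp2B1B // bit_exp2; have := ltn_ord i; rewrite ltnS leq_eqVlt.
case/orP => [/eqP -> | hi]; first by rewrite eqxx ltnn (bit_small hj).
by rewrite hi (ltn_eqF hi); case: bit.
Qed.

Lemma sum_nat_card N (b : 'I_N -> bool) : \sum_x (b x)%:R = #|[set x | b x]|%:R :> algC.
Proof.
rewrite -sum1dep_card natr_sum [RHS]big_mkcond /=.
by apply: eq_bigr => x _; case: (b x).
Qed.

Lemma sign_le1 k : (-1 : algC) ^+ k <= 1.
Proof. by rewrite -signr_odd; case: (odd k); rewrite ?expr0 ?expr1 // (le_trans (lerN10 _)). Qed.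

(* Each summand is [e * s * (a + b)] with signs [e, s, a, b], so it lies in
   [-2, 2] and flipping [s] at an error position lowers it by at most 4. *)
Lemma amp_sum_hamming m (z w : {ffun 'I_(2 ^ m.+1) -> bool}) y :
  amp_sum w y - 4 * (hamming_dist z w)%:R <= amp_sum z y.
Proof.
rewrite /amp_sum /hamming_dist -sum_nat_card mulr_sumr -sumrB.
apply: ler_sum => x _.
set e := (-1) ^+ bitdot m.+1 x y.
set a := (-1) ^+ bitdot m.+1 x (2 ^ m); set b := (-1) ^+ bitdot m.+1 x (2 ^ m - 1).
have [-> | /negbTE zw] := eqVneq (z x) (w x); first by rewrite mulr0 subr0.
have -> : z x = ~~ w x by move: zw; case: (z x); case: (w x).
have ea : e * (-1) ^+ w x * a <= 1 by rewrite -!exprD sign_le1.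
have eb : e * (-1) ^+ w x * b <= 1 by rewrite -!exprD sign_le1.
rewrite signrN mulr1 -subr_ge0.
have -> : e * - (-1) ^+ w x * (a + b) - (e * (-1) ^+ w x * (a + b) - 4) =
   (1 - e * (-1) ^+ w x * a) * 2 + (1 - e * (-1) ^+ w x * b) * 2 by ring.
by apply: addr_ge0; apply: mulr_ge0; rewrite ?subr_ge0 ?ler0n.
Qed.

Lemma spinS m : spin m.+1 = (2 ^ m)%:R - 1 / 2.
Proof. by rewrite /spin expnS natrM; field. Qed.

Lemma spin_index_up m j : 1 / 2 + j%:R + spin m.+1 = (2 ^ m + j)%:R.
Proof. by rewrite spinS natrD; field. Qed.

Lemma spin_index_down m j :
  (j < 2 ^ m)%N -> - (1 / 2) - j%:R + spin m.+1 = (2 ^ m - 1 - j)%:R.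
Proof. by move=> hj; rewrite spinS !natrB ?subn_gt0 ?expn_gt0 //; [field | lia]. Qed.

Lemma spin_ketE n t k (i : 'I_(2 ^ n)) :
  t + spin n = k%:R -> spin_ket n t i 0 = (i == k :> nat)%:R.
Proof. by move=> tk; rewrite mxE tk eqr_nat. Qed.

Lemma sum_mul_delta N a (ha : (a < N)%N) (F : 'I_N -> algC) :
  \sum_(w < N) F w * (w == a :> nat)%:R = F (Ordinal ha).
Proof.
rewrite (bigD1 (Ordinal ha)) //= eqxx mulr1 big1 ?addr0 // => w hw.
suff /negbTE -> : (w : nat) != a by rewrite mulr0.
by apply: contra hw => /eqP wa; apply/eqP; exact: val_inj.
Qed.

Lemma braket_spin_ket n t k (hk : (k < 2 ^ n)%N) (v : 'cV[algC]_(2 ^ n)) :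
  t + spin n = k%:R -> braket (spin_ket n t) v = v (Ordinal hk) 0.
Proof.
move=> tk; rewrite /braket.
under eq_bigr => i _ do rewrite (spin_ketE _ tk) conjC_nat mulrC.
exact: sum_mul_delta.
Qed.

Lemma mul_hadn_UzE n z (y x : 'I_(2 ^ n)) : (hadn n *m Uz z) y x = hadn n y x * (-1) ^+ z x.
Proof.
rewrite !mxE (bigD1 x) //= !mxE eqxx mul1r big1 ?addr0 // => k kx.
by rewrite !mxE (negbTE kx) mul0r mulr0.
Qed.

Lemma Psi3E m z (y : 'I_(2 ^ m.+1)) :
  Psi3 z y 0 = (sqrtC 2)^-1 * (sqrtC (2 ^ m.+1)%:R)^-1 ^+ 2 * amp_sum z y.
Proof.
have up : 1 / 2 + spin m.+1 = (2 ^ m)%:R.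
  by have := spin_index_up m 0; rewrite addr0 addn0.
have down : - (1 / 2) + spin m.+1 = (2 ^ m - 1)%:R.
  by have := spin_index_down (expn_gt0 2 m); rewrite subr0 subn0.
have hu : (2 ^ m < 2 ^ m.+1)%N by rewrite ltn_exp2l.
have hd : (2 ^ m - 1 < 2 ^ m.+1)%N by move: hu; lia.
rewrite /Psi3 mxE.
under eq_bigr => w _ do rewrite !mxE up down !eqr_nat.
under eq_bigr => w _ do rewrite mulrDr mulrDr mulrCA [X in _ + X]mulrCA.
rewrite big_split /= -!mulr_sumr (sum_mul_delta hu) (sum_mul_delta hd).
rewrite -mulrDr -big_split /= -mulrA /amp_sum !mulr_sumr.
by apply: eq_bigr => x _; rewrite !mul_hadn_UzE !mxE bitdotC /=; ring.
Qed.

Lemma Psi3_sqr_norm_ge m (z w : {ffun 'I_(2 ^ m.+1) -> bool}) (y : 'I_(2 ^ m.+1)) :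
  (hamming_dist z w)%:R < (2 ^ m.+1)%:R / 16 :> algC ->
  amp_sum w y = (2 ^ m.+1)%:R ->
  9 / 32 <= `|Psi3 z y 0| ^+ 2.
Proof.
move=> hz wy; have := amp_sum_hamming z w y; rewrite wy Psi3E.
set N : algC := (2 ^ m.+1)%:R; set S := amp_sum z y.
set d : algC := (hamming_dist _ _)%:R in hz * => hS.
have N_gt0 : 0 < N by rewrite ltr0n expn_gt0.
have {hS} hS : 3 * N / 4 <= S.
  apply: le_trans hS; have -> : 3 * N / 4 = N - 4 * (N / 16) by field.
  by rewrite lerB // ler_wpM2l // ltW.
have hS0 : 0 <= 3 * N / 4 by rewrite divr_ge0 // mulr_ge0 // ltW.
have c_ge0 : 0 <= (sqrtC 2)^-1 * (sqrtC N)^-1 ^+ 2.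
  by rewrite mulr_ge0 // ?exprn_ge0 // invr_ge0 sqrtC_ge0 ?ler0n // ltW.
rewrite normrM (ger0_norm c_ge0) (ger0_norm (le_trans hS0 hS)) exprMn.
have -> : ((sqrtC 2)^-1 * (sqrtC N)^-1 ^+ 2) ^+ 2 = (2 * N ^+ 2)^-1.
  have sqrtCV2 (x : algC) : (sqrtC x)^-1 ^+ 2 = x^-1 by rewrite exprVn sqrtCK.
  by rewrite sqrtCV2 exprMn sqrtCV2 invfM exprVn.
apply: le_trans (ler_wpM2l _ (ler_pM hS0 hS0 hS hS)).
  by rewrite le_eqVlt; apply/orP; left; apply/eqP; field; exact: lt0r_neq0.
by rewrite invr_ge0 mulr_ge0 // ?ler0n // exprn_ge0 // ltW.
Qed.

Theorem lemma3 (n : nat) (hn : (1 <= n)%N) (j : nat) (hj : (j < 2 ^ n %/ 2)%N)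
  (z : {ffun 'I_(2 ^ n) -> bool})
  (hz : (hamming_dist z (hadamard_codeword n j))%:R < (2 ^ n)%:R / 16 :> algC) :
  9 / 16 <=
    `|braket (spin_ket n (1 / 2 + j%:R)) (Psi3 z)| ^+ 2
  + `|braket (spin_ket n (- (1 / 2) - j%:R)) (Psi3 z)| ^+ 2.
Proof.
case: n hn hj z hz => // m _ hj z hz.
have {hj} hj : (j < 2 ^ m)%N by move: hj; rewrite expnS mulKn.
have up : (2 ^ m + j < 2 ^ m.+1)%N by rewrite expnS; lia.
have down : (2 ^ m - 1 - j < 2 ^ m.+1)%N by rewrite expnS; lia.
rewrite (braket_spin_ket up _ (spin_index_up m j)).
rewrite (braket_spin_ket down _ (spin_index_down hj)).
have -> : 9 / 16 = 9 / 32 + 9 / 32 :> algC by field.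
apply: lerD; apply: (Psi3_sqr_norm_ge hz).
  exact: amp_sum_codeword_exp2D.
exact: amp_sum_codeword_exp2B1B.
Qed.
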